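(* Let $T>0$, $0\leq t<T$, $\tau=T-t$, $r\geq 0$, $\sigma>0$, $n\in\mathbb{N}$, and let $S_t>0$ and $M_t>0$ with $M_t\geq S_t$. Put $u=e^{\sigma\sqrt{\tau/n}}$, $d=u^{-1}$, $q=\frac{u-e^{-r\tau/n}}{u-d}$ and $j_0=\frac{\log(M_t/S_t)}{\sigma\sqrt{\tau/n}}$. Let $\Lambda^{j_0}_{j,k,n}$ and $J$ be as in the context, and define the discrete (Cheuk–Vorst) price of the European lookback put with floating strike at time $t$ by \[ P^{fl}_n(t) = S_t \sum_{j\in J} (u^{j}-1)\sum_{k=0}^n \Lambda^{j_0}_{j,k,n}\, (1-q)^{k}q^{n-k}. \] Then $P^{fl}_n(t) = S_t(V_1-V_2+V_3)$, where, with $k_{\min}=n-\lfloor \frac{n+j_0}{2}\rfloor$ and $k_{\max}=k_{\max}(j)=\lfloor\frac{n-\lfloor j_0\rfloor-1+j}{2}\rfloor$, \begin{align*} V_1&=\sum_{k=k_{\min}}^{n}(u^{j_0+2k-n}-1) \binom{n}{k}(1-q)^{k}q^{n-k},\\ V_2&=\sum_{k=k_{\min}}^{n-\lfloor j_0\rfloor-1} (u^{j_0+2k-n}-1)\binom{n}{k+\lfloor j_0\rfloor+1}(1-q)^{k}q^{n-k},\\ V_3&=\sum_{j=0}^{n-\lfloor j_0\rfloor-1}(u^{j}-1) \sum_{k=j}^{k_{\max}}\Big[\binom{n}{k-j}-\binom{n}{k-j-1}\Big] (1-q)^{k}q^{n-k}. \end{align*}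
   Context: Here $S_t$ is the current price of the underlying and $M_t=\max_{t^*\leq t}S_{t^*}$ its running maximum since emission. Consider the directed graph with initial node $(0,j_0)$ in which, from each node $(m,j_m)$ with $0\leq m<n$, there are exactly two edges: an ''up'' edge to $(m+1,j_m+1)$ and a ''down'' edge to $(m+1,\max(j_m-1,0))$. $\Lambda^{j_0}_{j,k,n}$ is the number of paths from $(0,j_0)$ to $(n,j)$ with exactly $k$ up jumps, and $J$ is the set of levels $j$ such that $(n,j)$ is reachable from $(0,j_0)$. $\lfloor x\rfloor$ is the integer part; binomial coefficients $\binom{n}{i}$ are $0$ for $i<0$ or $i>n$. *)

From HB Require Import structures.
From mathcomp Require Import all_boot all_order all_algebra.
From mathcomp Require Import all_classical all_reals all_analysis.
Set Implicit Arguments. Unset Strict Implicit. Unset Printing Implicit Defensive.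
Import Order.TTheory GRing.Theory Num.Theory.
Local Open Scope ring_scope.

Section CV.
Variable R : realType.

Definition lb_step (x : R) (b : bool) : R :=
  if b then x + 1 else Num.max (x - 1) 0.

(* A path of length n starting at (0,j0) is identified with its sequence of
   n edge choices (each node has exactly one up and one down edge). *)
Definition lb_end (j0 : R) (s : seq bool) : R := foldl lb_step j0 s.

(* Lambda^{j0}_{j,k,n}: number of paths (0,j0) -> (n,j) with exactly k up jumps. *)
Definition Lambda (j0 j : R) (k n : nat) : nat :=
  #|[set s : n.-tuple bool | (count id s == k) && (lb_end j0 s == j)]|.

(* J: the (finite) set of levels j such that (n,j) is reachable from (0,j0),
   as a duplicate-free list. *)
Definition Jlev (j0 : R) (n : nat) : seq R :=
  undup [seq lb_end j0 (val s) | s : n.-tuple bool].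

Definition binZ (n : nat) (i : int) : nat :=
  match i with Posz m => 'C(n, m) | Negz _ => 0%N end.

Definition Pfl (S u q j0 : R) (n : nat) : R :=
  S * \sum_(j <- Jlev j0 n)
        (u `^ j - 1) * \sum_(0 <= k < n.+1)
           (Lambda j0 j k n)%:R * (1 - q) ^+ k * q ^+ (n - k).

(* floor of j0 (j0 >= 0 here, so truncn = floor) *)
Definition fl (x : R) : nat := Num.truncn x.

(* k_min = n - floor((n+j0)/2); negative values only occur when all
   corresponding terms of V1 vanish (binomial = 0) and V2 is empty,
   so k ranges over naturals from max(k_min,0). *)
Definition kmin (j0 : R) (n : nat) : nat := (n - Num.truncn ((n%:R + j0) / 2))%N.

Definition V1 (u q j0 : R) (n : nat) : R :=
  \sum_(kmin j0 n <= k < n.+1)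
     (u `^ (j0 + (2 * k)%:R - n%:R) - 1) * ('C(n, k))%:R * (1 - q) ^+ k * q ^+ (n - k).

Definition V2 (u q j0 : R) (n : nat) : R :=
  \sum_(kmin j0 n <= k < n - fl j0)
     (u `^ (j0 + (2 * k)%:R - n%:R) - 1) * ('C(n, k + fl j0 + 1))%:R
       * (1 - q) ^+ k * q ^+ (n - k).

Definition kmax (j0 : R) (n j : nat) : nat := ((n - fl j0 - 1 + j) %/ 2)%N.

Definition V3 (u q j0 : R) (n : nat) : R :=
  \sum_(0 <= j < n - fl j0)
    (u `^ j%:R - 1) * \sum_(j <= k < (kmax j0 n j).+1)
       ((binZ n (k%:Z - j%:Z))%:R - (binZ n (k%:Z - j%:Z - 1))%:R)
         * (1 - q) ^+ k * q ^+ (n - k).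

End CV.

From HB Require Import structures.
From mathcomp Require Import all_boot all_order all_algebra.
From mathcomp Require Import all_classical all_reals all_analysis.
From mathcomp Require Import zify ring lra.
Import Order.TTheory GRing.Theory Num.Theory.

(* Group the paths by their number k of up jumps and by the depth D to which
   the unconstrained walk (without the floor at 0) dips below its start. If
   D <= floor j0 the floor is never active and the path ends at j0 + 2k - n;
   otherwise the floor absorbs D - j0 and the path ends at the integer level
   2k - n + D. By the reflection principle the paths with k ups and D >= a
   number 'C(n, k + a) or 'C(n, k). The first kind of path yields V1 - V2, and
   the differences of consecutive reflection counts, which count the paths of
   a given depth, yield the ballot numbers of V3. *)

Lemma card_set_sum (T : finType) (P : pred T) :
  #|[set s : T | P s]| = \sum_(s : T) (P s : nat).
Proof.
rewrite -sum1dep_card big_mkcond /=; apply: eq_bigr => s _.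
by case: (P s).
Qed.

Lemma card_setID (T : finType) (P a : pred T) :
  #|[set s | P s]| = (#|[set s | P s && a s]| + #|[set s | P s && ~~ a s]|)%N.
Proof.
rewrite !card_set_sum -big_split /=; apply: eq_bigr => s _.
by case: (P s); case: (a s).
Qed.

Lemma card_tuple_cons (n : nat) (P : pred (seq bool)) :
  #|[set s : n.+1.-tuple bool | P s]| =
  (#|[set s : n.-tuple bool | P (true :: s)]|
   + #|[set s : n.-tuple bool | P (false :: s)]|)%N.
Proof.
rewrite !card_set_sum.
pose h (p : bool * n.-tuple bool) : n.+1.-tuple bool := cons_tuple p.1 p.2.
have h_bij : bijective h.
  exists (fun t : n.+1.-tuple bool => (thead t, behead_tuple t)).
    by case=> b s; congr pair; apply: val_inj.
  by move=> t; rewrite /h /= [RHS]tuple_eta.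
rewrite (reindex h (onW_bij _ h_bij)) /=.
by rewrite -(pair_big xpredT xpredT (fun b (s : n.-tuple bool) => (P (b :: s) : nat))) big_bool.
Qed.

(* How far the walk s (true = up) dips below its starting level, i.e. the
   maximum over the prefixes of s of the number of downs minus the number of
   ups. *)
Fixpoint depth (s : seq bool) : nat :=
  if s is b :: s' then (if b then (depth s').-1 else (depth s').+1) else 0.

Lemma count_add_depth_le (s : seq bool) : (count id s + depth s <= size s)%N.
Proof. by elim: s => [|[] s IH] //=; case: (depth s) IH => [|m] /=; lia. Qed.

Lemma size_le_count_add_depth (s : seq bool) : (size s <= 2 * count id s + depth s)%N.
Proof. by elim: s => [|[] s IH] //=; case: (depth s) IH => [|m] /=; lia. Qed.

(* When n <= 2k + a the walk ends at most a below its start and the paths are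
   counted by reflecting them at their first visit to depth a; otherwise every
   path reaches depth a. *)
Definition reflection_bin (n k a : nat) : nat :=
  if (n <= 2 * k + a)%N then 'C(n, k + a) else 'C(n, k).

Lemma card_depth_ge (n k a : nat) :
  #|[set s : n.-tuple bool | (count id s == k) && (a <= depth s)]| =
  reflection_bin n k a.
Proof.
elim: n k a => [|n IH] k a.
  rewrite card_set_sum.
  rewrite (eq_bigr (fun _ => ((k == 0%N) && (a == 0%N)) : nat)); last first.
    by move=> s _; rewrite (tuple0 s) /= eq_sym leqn0.
  by rewrite sum_nat_const card_tuple /= /reflection_bin; case: k => [|k]; case: a.
rewrite (@card_tuple_cons n (fun s => (count id s == k) && (a <= depth s))).
have -> : #|[set s : n.-tuple bool | (count id (true :: s) == k) && (a <= depth (true :: s))]|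
   = if k is k'.+1 then reflection_bin n k' (if a == 0%N then 0%N else a.+1) else 0%N.
  case: k => [|k].
    by apply/eqP; rewrite cards_eq0; apply/eqP/setP => s; rewrite !inE.
  rewrite -IH; apply: eq_card => s; rewrite !inE /= add1n eqSS.
  case: (count id s == k) => //=; case: a => [|a] //=.
  by case: (depth s).
have -> : #|[set s : n.-tuple bool | (count id (false :: s) == k) && (a <= depth (false :: s))]|
   = reflection_bin n k a.-1.
  by rewrite -IH; apply: eq_card => s; rewrite !inE /= add0n; case: a.
rewrite /reflection_bin; case: k => [|k].
  rewrite add0n; case: a => [|a] /=; first by rewrite !if_same !bin0.
  rewrite !muln0 !add0n !bin0 ltnS.
  case: ifP => // n_le_a.
  by rewrite binS (@bin_small n a.+1) ?ltnS.
case: a => [|a] /=; first by rewrite !addn0 !if_same binS addnC.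
have -> : (n <= 2 * k + a.+2) = (n <= 2 * k.+1 + a) by congr leq; lia.
have -> : (n < 2 * k.+1 + a.+1) = (n <= 2 * k.+1 + a) by rewrite addnS ltnS.
case: (leqP n (2 * k.+1 + a)) => _; last by rewrite binS addnC.
rewrite (_ : k + a.+2 = (k.+1 + a).+1)%N; last lia.
by rewrite (_ : k.+1 + a.+1 = (k.+1 + a).+1)%N ?binS; last lia.
Qed.

Lemma card_depth_eq (n k b : nat) :
  (#|[set s : n.-tuple bool | (count id s == k) && (depth s == b)]|
   + reflection_bin n k b.+1)%N = reflection_bin n k b.
Proof.
rewrite -!card_depth_ge [RHS](card_setID _
  (fun s : n.-tuple bool => (count id s == k) && (b <= depth s)) (fun s => b < depth s)).
rewrite addnC; congr addn; apply: eq_card => s; rewrite !inE -andbA;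
  by case: (count id s == k) => //=; case: ltngtP.
Qed.

Lemma card_depth_level (n m k j : nat) :
  #|[set s : n.-tuple bool |
      ((count id s == k) && ~~ (depth s <= m)) && (j + n == 2 * k + depth s)]| =
  if (m < n + j - 2 * k) && (2 * k <= n + j) then
    #|[set s : n.-tuple bool | (count id s == k) && (depth s == n + j - 2 * k)]|
  else 0.
Proof.
case: ifP => [/andP[lt_m le_2k] | out_of_range].
  apply: eq_card => s; rewrite !inE -andbA; case: (count id s == k) => //=.
  move: (depth s) => D; apply/andP/eqP => [[_ /eqP] | ->]; first lia.
  by split; [|apply/eqP]; lia.
apply/eqP; rewrite cards_eq0; apply/eqP/setP => s; rewrite !inE.
apply/negbTE/negP => /andP[/andP[_ deep] /eqP level]; move/negbT: out_of_range.
by move: (depth s) deep level => D; lia.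
Qed.

Lemma card_count_eq (n k : nat) :
  #|[set s : n.-tuple bool | count id s == k]| = 'C(n, k).
Proof.
rewrite -[RHS](_ : reflection_bin n k 0 = 'C(n, k)); last by rewrite /reflection_bin !addn0 if_same.
by rewrite -card_depth_ge; apply: eq_card => s; rewrite !inE andbT.
Qed.

Lemma card_depth_le (n k m : nat) :
  (#|[set s : n.-tuple bool | (count id s == k) && (depth s <= m)]|
   + reflection_bin n k m.+1)%N = 'C(n, k).
Proof.
rewrite -card_count_eq -card_depth_ge
  (card_setID _ (fun s : n.-tuple bool => count id s == k) (fun s => depth s <= m)).
by congr addn; apply: eq_card => s; rewrite !inE ltnNge.
Qed.

Local Open Scope ring_scope.

Lemma binZ_subn (n k j : nat) :
  binZ n (k%:Z - j%:Z) = if (j <= k)%N then 'C(n, k - j) else 0%N.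
Proof.
case: leqP => le_jk; first by rewrite subzn.
have : k%:Z - j%:Z < 0 by lia.
by case: (k%:Z - j%:Z).
Qed.

Lemma binZ_subn1 (n k j : nat) :
  binZ n (k%:Z - j%:Z - 1) = if (j < k)%N then 'C(n, k - j.+1) else 0%N.
Proof.
case: ltnP => lt_jk; first by rewrite (_ : k%:Z - j%:Z - 1 = (k - j.+1)%N%:Z); last lia.
have : k%:Z - j%:Z - 1 < 0 by lia.
by case: (k%:Z - j%:Z - 1).
Qed.

Section Sums.
Variable V : nmodType.

Lemma sum_seq_pick (I : eqType) (r : seq I) (x : I) (F : I -> V) :
  x \in r -> uniq r -> \sum_(i <- r) (if x == i then F i else 0) = F x.
Proof.
move=> xr r_uniq; rewrite (bigD1_seq x) //= eqxx big1_seq ?addr0 // => i /andP[ne_ix _].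
by rewrite eq_sym (negbTE ne_ix).
Qed.

Lemma sum_ord_pick (N x : nat) (F : nat -> V) :
  (x < N)%N -> \sum_(i < N) (if x == i then F i else 0) = F x.
Proof.
move=> lt_xN; rewrite -big_mkcond /=.
by rewrite (eq_bigl (fun i : 'I_N => i == x :> nat)) ?big_ord1_eq ?lt_xN // => i; rewrite eq_sym.
Qed.

Lemma sum_ord_pick_shift (N a x : nat) (F : nat -> V) :
  (a <= x)%N -> (x - a < N)%N ->
  \sum_(i < N) (if (i + a == x)%N then F i else 0) = F (x - a)%N.
Proof.
move=> le_ax lt_N; rewrite -(sum_ord_pick _ _ F lt_N); apply: eq_bigr => i _.
by have -> : (i + a == x)%N = (x - a == i)%N by apply/eqP/eqP; lia.
Qed.

Lemma sum_const_card (T : finType) (P : pred T) (c : V) :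
  \sum_(s | P s) c = c *+ #|[set s | P s]|.
Proof. by rewrite -sumr_const; apply: eq_bigl => s; rewrite inE. Qed.

Lemma sum_by_count (n : nat) (F : nat -> n.-tuple bool -> V) :
  \sum_(k < n.+1) \sum_(s : n.-tuple bool | count id s == k) F k s =
  \sum_(s : n.-tuple bool) F (count id s) s.
Proof.
under eq_bigr do rewrite big_mkcond /=.
rewrite exchange_big; apply: eq_bigr => s _.
rewrite (sum_ord_pick _ _ (fun k => F k s)) // ltnS.
by rewrite -[X in (_ <= X)%N](size_tuple s) count_size.
Qed.

End Sums.

Section ReflectedWalk.
Variable R : realType.

Lemma lb_end_depth (j0 : R) (s : seq bool) : 0 <= j0 ->
  lb_end j0 s = j0 + (2 * count id s)%:R - (size s)%:R - Num.min 0 (j0 - (depth s)%:R).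
Proof.
elim: s j0 => [|b s IH] j0 j0_ge0.
  by rewrite /lb_end /= muln0 !subr0 addr0 minEle ifT ?subr0.
have step_ge0 : 0 <= lb_step j0 b.
  by rewrite /lb_step; case: b; [lra | rewrite maxEle; case: ifP; lra].
rewrite /lb_end /= -/(lb_end _ _) (IH _ step_ge0) /lb_step {step_ge0}.
have depth_ge0 : 0 <= (depth s)%:R :> R := ler0n _ _.
case: b => /=; last first.
  by rewrite !minEle !maxEle !natrM ?natrD /= -!natr1 ?add0n; repeat case: leP => ?; lra.
case: (depth s) depth_ge0 => [|D] /= _.
  by rewrite !subr0 !minEle !ifT ?natrM ?natrD //=; lra.
by rewrite !minEle !natrM !natrD /= -!natr1; repeat case: leP => ?; lra.
Qed.

Lemma lb_end_shallow (j0 : R) (s : seq bool) : 0 <= j0 -> (depth s)%:R <= j0 ->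
  lb_end j0 s = j0 + (2 * count id s)%:R - (size s)%:R.
Proof. by move=> j0_ge0 shallow; rewrite lb_end_depth // minEle ifT ?subr0 //; lra. Qed.

Lemma lb_end_deep (j0 : R) (s : seq bool) : 0 <= j0 -> j0 < (depth s)%:R ->
  lb_end j0 s = (2 * count id s + depth s - size s)%:R.
Proof.
move=> j0_ge0 deep; rewrite lb_end_depth // minEle ifF; last by apply/negbTE; rewrite -ltNge; lra.
by rewrite natrB ?size_le_count_add_depth // natrD; lra.
Qed.

Lemma kmin_leq (j0 : R) (n k : nat) : 0 <= j0 -> (k <= n)%N ->
  (kmin j0 n <= k)%N = (n <= 2 * k + fl j0)%N.
Proof.
move=> j0_ge0 le_kn; rewrite /kmin leq_subLR.
set F := Num.truncn _.
have half_ge0 : 0 <= (n%:R + j0) / 2 :> R by apply: divr_ge0 => //; apply: addr_ge0.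
have /andP[F_le lt_F] := truncn_itv half_ge0.
have /andP[m_le lt_m] := truncn_itv j0_ge0.
rewrite -/F in F_le lt_F; rewrite /fl; set m := Num.truncn j0 in m_le lt_m *.
apply/idP/idP => H.
  have : (n - k)%:R <= (n%:R + j0) / 2 :> R.
    by apply: le_trans F_le; rewrite ler_nat; lia.
  rewrite natrB // => le_half.
  have : (2 * (n - k))%:R < (n + m.+1)%:R :> R.
    by rewrite natrM natrD natrB //; lra.
  by rewrite ltr_nat; lia.
suff : (n - k <= F)%N by lia.
rewrite /F truncn_ge_nat //.
have : (2 * (n - k))%:R <= (n + m)%:R :> R by rewrite ler_nat; lia.
by rewrite natrM natrD natrB //; lra.
Qed.

Lemma sum_Jlev_Lambda (j0 : R) (f : R -> R) (w : nat -> R) (n : nat) :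
  \sum_(j <- Jlev j0 n) f j * \sum_(0 <= k < n.+1) (Lambda j0 j k n)%:R * w k =
  \sum_(k < n.+1) w k * \sum_(s : n.-tuple bool | count id s == k) f (lb_end j0 s).
Proof.
have Lambda_sum j k : (Lambda j0 j k n)%:R =
    \sum_(s : n.-tuple bool | count id s == k) (lb_end j0 s == j)%:R :> R.
  rewrite /Lambda card_set_sum natr_sum [RHS]big_mkcond; apply: eq_bigr => s _.
  by case: (count id s == k).
transitivity (\sum_(j <- Jlev j0 n) \sum_(s : n.-tuple bool)
                (if lb_end j0 s == j then f j * w (count id s) else 0)).
  apply: eq_bigr => j _; rewrite big_mkord.
  under eq_bigr do rewrite Lambda_sum mulr_suml.
  rewrite (@sum_by_count _ _ (fun k s => (lb_end j0 s == j)%:R * w k)) mulr_sumr.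
  apply: eq_bigr => s _.
  by case: (lb_end j0 s == j); rewrite ?mul1r ?mul0r ?mulr0.
under [RHS]eq_bigr do rewrite mulr_sumr.
rewrite exchange_big [RHS](@sum_by_count _ _ (fun k s => w k * f (lb_end j0 s))).
apply: eq_bigr => s _.
rewrite /Jlev (@sum_seq_pick _ _ _ _ (fun j => f j * w (count id s))) ?undup_uniq //.
  exact: mulrC.
by rewrite mem_undup; apply: map_f; rewrite mem_enum.
Qed.

Lemma sum_lb_end_count (j0 : R) (f : R -> R) (n k : nat) : 0 <= j0 ->
  \sum_(s : n.-tuple bool | count id s == k) f (lb_end j0 s) =
  f (j0 + (2 * k)%:R - n%:R) * (('C(n, k))%:R - (reflection_bin n k (fl j0).+1)%:R)
  + \sum_(j < n - fl j0) f j%:R *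
     (#|[set s : n.-tuple bool |
         ((count id s == k) && ~~ (depth s <= fl j0)%N) && (j + n == 2 * k + depth s)%N]|)%:R.
Proof.
move=> j0_ge0; set m := fl j0.
have m_le : m%:R <= j0 by rewrite /m /fl truncn_le.
have lt_m1 : j0 < m.+1%:R by rewrite /m /fl; case/andP: (truncn_itv j0_ge0).
rewrite (bigID (fun s : n.-tuple bool => (depth s <= m)%N)) /=; congr (_ + _).
  rewrite (eq_bigr (fun=> f (j0 + (2 * k)%:R - n%:R))) => [|s /andP[/eqP count_s shallow]].
    by rewrite sum_const_card -(card_depth_le n k m) natrD addrK mulr_natr.
  rewrite lb_end_shallow ?size_tuple ?count_s //.
  by apply: le_trans m_le; rewrite ler_nat.
rewrite (eq_bigr (fun s : n.-tuple bool =>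
    \sum_(j < n - m) (if (j + n == 2 * k + depth s)%N then f j%:R else 0)))
    => [|s /andP[/eqP count_s deep]].
  rewrite exchange_big /=; apply: eq_bigr => j _.
  by rewrite -big_mkcondr /= sum_const_card mulr_natr.
have := count_add_depth_le s; have := size_le_count_add_depth s.
rewrite size_tuple count_s => ge_n le_n.
have deep_j0 : j0 < (depth s)%:R by apply: lt_le_trans lt_m1 _; rewrite ler_nat; lia.
by rewrite (@sum_ord_pick_shift _ _ _ _ (fun j => f j%:R)) ?lb_end_deep ?size_tuple ?count_s //; lia.
Qed.

Lemma shallow_coef (n m k : nat) : (k <= n)%N ->
  ('C(n, k))%:R - (reflection_bin n k m.+1)%:R =
  (if (n <= 2 * k + m)%N then ('C(n, k))%:R else 0 : R)
  - (if (n <= 2 * k + m)%N && (k < n - m)%N then ('C(n, k + m.+1))%:R else 0).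
Proof.
move=> le_kn; rewrite /reflection_bin.
case: (leqP n (2 * k + m)) => le_n /=.
  rewrite ifT; last lia.
  case: ltnP => // le_k.
  by rewrite (@bin_small n (k + m.+1)) ?subr0 //; lia.
rewrite subrr; case: (leqP n (2 * k + m.+1)) => le_n1; last by rewrite subrr.
by rewrite (_ : k + m.+1 = n - k)%N ?bin_sub ?subrr //; lia.
Qed.

Lemma card_deep_level_ballot (n m k j : nat) : (j < n - m)%N -> (k <= n)%N ->
  (#|[set s : n.-tuple bool |
      ((count id s == k) && ~~ (depth s <= m)%N) && (j + n == 2 * k + depth s)%N]|)%:R =
  if (j <= k)%N && (k < ((n - m - 1 + j) %/ 2).+1)%N then
    (binZ n (k%:Z - j%:Z))%:R - (binZ n (k%:Z - j%:Z - 1))%:R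
  else 0 :> R.
Proof.
move=> lt_j le_kn; rewrite card_depth_level ltnS leq_divRL // binZ_subn binZ_subn1.
case: ifP => [/andP[lt_m le_2k] | out_of_range]; last first.
  rewrite ifF //; apply/negbTE/negP => /andP[? ?]; move/negP: out_of_range; apply.
  by apply/andP; split; lia.
set b := (n + j - 2 * k)%N.
have -> : (#|[set s : n.-tuple bool | (count id s == k) && (depth s == b)]|)%:R =
    (reflection_bin n k b)%:R - (reflection_bin n k b.+1)%:R :> R.
  by rewrite -(card_depth_eq n k b) natrD addrK.
rewrite /reflection_bin /b.
rewrite ifT; last lia.
rewrite ifT; last lia.
case: (leqP j k) => [le_jk | lt_kj] /=; last by rewrite !bin_small ?subrr //; lia.
rewrite ifT; last lia.
rewrite (_ : k + (n + j - 2 * k) = n - (k - j))%N ?bin_sub; [|lia|lia].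
case: (ltnP j k) => [lt_jk | le_kj]; last by rewrite (@bin_small n (k + _)) //; lia.
by rewrite (_ : k + (n + j - 2 * k).+1 = n - (k - j.+1))%N ?bin_sub //; lia.
Qed.

End ReflectedWalk.

Section LookbackPut.
Variable R : realType.
Variables (u q j0 : R) (n : nat).
Hypothesis j0_ge0 : 0 <= j0.

Let m := fl j0.
Let w (k : nat) := (1 - q) ^+ k * q ^+ (n - k).
Let f (x : R) := u `^ x - 1.

Let c_V1 (k : nat) : R := if (n <= 2 * k + m)%N then ('C(n, k))%:R else 0.
Let c_V2 (k : nat) : R :=
  if (n <= 2 * k + m)%N && (k < n - m)%N then ('C(n, k + m.+1))%:R else 0.
Let c_V3 (k j : nat) : R :=
  if (j <= k)%N && (k < (kmax j0 n j).+1)%N then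
    (binZ n (k%:Z - j%:Z))%:R - (binZ n (k%:Z - j%:Z - 1))%:R
  else 0.

Lemma Pfl_by_count (S : R) : Pfl S u q j0 n =
  S * \sum_(k < n.+1) w k * (f (j0 + (2 * k)%:R - n%:R) * (c_V1 k - c_V2 k)
                             + \sum_(j < n - m) f j%:R * c_V3 k j).
Proof.
rewrite /Pfl; congr (S * _).
rewrite (eq_bigr (fun j => f j * \sum_(0 <= k < n.+1) (Lambda j0 j k n)%:R * w k)) => [|j _].
  rewrite sum_Jlev_Lambda; apply: eq_bigr => -[k /= lt_kn] _; congr (_ * _).
  rewrite sum_lb_end_count // shallow_coef //; congr (_ + _).
  by apply: eq_bigr => -[j /= lt_j] _; rewrite card_deep_level_ballot.
by congr (_ * _); apply: eq_bigr => k _; rewrite /w mulrA.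
Qed.

Lemma V1_by_count : V1 u q j0 n = \sum_(k < n.+1) f (j0 + (2 * k)%:R - n%:R) * c_V1 k * w k.
Proof.
rewrite /V1 big_geq_mkord big_mkcond; apply: eq_bigr => -[k /= lt_kn] _.
rewrite kmin_leq // /c_V1; case: ifP => _; last by rewrite mulr0 mul0r.
by rewrite /w !mulrA.
Qed.

Lemma V2_by_count : V2 u q j0 n = \sum_(k < n.+1) f (j0 + (2 * k)%:R - n%:R) * c_V2 k * w k.
Proof.
rewrite /V2 (@big_nat_widen _ _ _ _ _ n.+1); last lia.
rewrite big_geq_mkord big_mkcond; apply: eq_bigr => -[k /= lt_kn] _.
rewrite kmin_leq // /c_V2 (andbC (k < n - m)%N); case: ifP => _; last by rewrite mulr0 mul0r.
by rewrite /w addn1 addnS !mulrA.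
Qed.

Lemma V3_by_count :
  V3 u q j0 n = \sum_(k < n.+1) \sum_(j < n - m) f j%:R * c_V3 k j * w k.
Proof.
rewrite /V3 big_mkord exchange_big; apply: eq_bigr => -[j /= lt_j] _.
rewrite mulr_sumr (@big_nat_widen _ _ _ _ _ n.+1); last by rewrite ltnS /kmax; lia.
rewrite big_geq_mkord big_mkcond; apply: eq_bigr => -[k /= lt_kn] _.
rewrite /c_V3 (andbC (k < _)%N); case: ifP => _; last by rewrite mulr0 mul0r.
by rewrite /f /w !mulrA.
Qed.

Lemma Pfl_decomposition (S : R) :
  Pfl S u q j0 n = S * (V1 u q j0 n - V2 u q j0 n + V3 u q j0 n).
Proof.
rewrite Pfl_by_count V1_by_count V2_by_count V3_by_count -sumrB -big_split /=.
congr (S * _); apply: eq_bigr => k _; rewrite mulrDr mulr_sumr; congr (_ + _).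
  by ring.
by apply: eq_bigr => j _; ring.
Qed.

End LookbackPut.

Theorem theorem2p3 (R : realType) (T t r sigma S M : R) (n : nat)
  (hT : 0 < T) (ht0 : 0 <= t) (htT : t < T) (hr : 0 <= r) (hsigma : 0 < sigma)
  (hn : (0 < n)%N) (hS : 0 < S) (hM : 0 < M) (hMS : S <= M) :
  let tau := T - t in
  let u := expR (sigma * Num.sqrt (tau / n%:R)) in
  let d := u^-1 in
  let q := (u - expR (- r * tau / n%:R)) / (u - d) in
  let j0 := ln (M / S) / (sigma * Num.sqrt (tau / n%:R)) in
  Pfl S u q j0 n = S * (V1 u q j0 n - V2 u q j0 n + V3 u q j0 n).
Proof.
move=> tau u d q j0; apply: Pfl_decomposition.
rewrite /j0; apply: divr_ge0.
  by apply: ln_ge0; rewrite ler_pdivlMr // mul1r.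
by apply: mulr_ge0; [lra | apply: sqrtr_ge0].
Qed.
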